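(* Let $r \in \mathbb{Q} \cap (0,1)$ be such that $S_r$ is atomic (equivalently, $\mathsf{n}(r) > 1$). Let $x \in S_r \setminus \{0\}$ and let $z = \sum_{i=0}^N \alpha_i r^i \in \mathsf{Z}(x)$, where $N \in \mathbb{N}$ and $\alpha_0, \dots, \alpha_N \in \mathbb{N}_0$. Then: (1) $|z| = \min \mathsf{L}(x)$ if and only if $\alpha_i < \mathsf{d}(r)$ for all $i \in \{1, \dots, N\}$; (2) there is exactly one factorization in $\mathsf{Z}(x)$ of minimum length; (3) $\sup \mathsf{L}(x) = \infty$ if and only if $\alpha_i \ge \mathsf{n}(r)$ for some $i \in \{0, \dots, N\}$; (4) $|\mathsf{Z}(x)| = 1$ if and only if $|\mathsf{L}(x)| = 1$, and in this case $\alpha_i < \mathsf{n}(r)$ for all $i \in \{0, \dots, N\}$.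
   Context: For $q \in \mathbb{Q}_{>0}$, $\mathsf{n}(q)$ and $\mathsf{d}(q)$ denote the unique positive integers with $\gcd(\mathsf{n}(q),\mathsf{d}(q))=1$ and $q = \mathsf{n}(q)/\mathsf{d}(q)$. For $r \in \mathbb{Q}_{>0}$, $S_r$ denotes the additive submonoid of $(\mathbb{Q}_{\ge 0},+)$ generated by $\{r^n : n \in \mathbb{N}_0\}$. $S_r$ is atomic exactly when $r=1$ or $\mathsf{n}(r)>1$; if moreover $r \notin \mathbb{N}$, its atoms (nonzero elements not expressible as a sum of two nonzero elements) are exactly the pairwise distinct elements $r^n$, $n \in \mathbb{N}_0$. A factorization of $x \in S_r$ is a formal finite sum $\sum_i \alpha_i r^i$ with $\alpha_i \in \mathbb{N}_0$ (an element of the free commutative monoid on the atoms) whose value in $\mathbb{Q}$ is $x$; $\mathsf{Z}(x)$ is the set of factorizations of $x$, the length of $z=\sum_i \alpha_i r^i$ is $|z| = \sum_i \alpha_i$, and $\mathsf{L}(x) = \{|z| : z \in \mathsf{Z}(x)\}$ is the set of lengths of $x$. Two formal sums differing only by zero coefficients are identified. *)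

From HB Require Import structures.
From mathcomp Require Import all_boot all_order all_algebra.
Set Implicit Arguments. Unset Strict Implicit. Unset Printing Implicit Defensive.
Import Order.TTheory GRing.Theory Num.Theory.

(* A factorization sum_i alpha_i r^i in S_r is represented by its coefficient
   list [:: alpha_0; ...; alpha_N] (a seq nat).  Two lists differing only by
   trailing zeros denote the same formal sum (see [same_fact]). *)

Definition fval (r : rat) (s : seq nat) : rat :=
  (\sum_(i < size s) (nth 0%N s i)%:R * r ^+ i)%R.

Definition flen (s : seq nat) : nat := sumn s.

Definition same_fact (s t : seq nat) : Prop :=
  forall i : nat, nth 0%N s i = nth 0%N t i.

Definition is_fact (r x : rat) (s : seq nat) : Prop := fval r s = x.

From HB Require Import structures.
From mathcomp Require Import all_boot all_order all_algebra.
From mathcomp Require Import zify ring lra.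
From Stdlib Require Import Classical.
Import Order.TTheory GRing.Theory Num.Theory.
Set Implicit Arguments. Unset Strict Implicit.

(* Write r = n/d in lowest terms, with 1 < n < d.  A factorization is its list
   of coefficients, and the basic move is the exchange n * r^i = d * r^(i+1),
   which changes the length by d - n > 0 while keeping the value.

   - Call a factorization reduced when its coefficients at positive indices
     are all < d.  Exchanging downwards shortens a factorization, so every
     factorization can be shortened to a reduced one ([reduce_fact]).
   - Two reduced factorizations of the same element coincide
     ([reduced_unique]): values of factorizations have powers of d as
     denominators, so r * X being an integer forces X to be a multiple of d,
     and the coefficients can be compared one index at a time.
   Hence minimal length is the same as reducedness, which gives parts (1)
   and (2).  Exchanging upwards a coefficient >= n lengthens a factorization
   and leaves a coefficient >= n, so lengths are unbounded; conversely a
   factorization with all coefficients < n has maximal length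
   ([small_coeffs_max_length]).  This gives (3), and (4) combines both. *)

Section Factorizations.
Variables (r : rat) (n d : nat).
Hypothesis r_nd : r = (n%:R / d%:R)%R.
Hypothesis n_gt1 : (1 < n)%N.
Hypothesis n_lt_d : (n < d)%N.
Hypothesis coprime_nd : coprime n d.

Local Open Scope ring_scope.

Lemma fval_nil : fval r [::] = 0.
Proof. by rewrite /fval big_ord0. Qed.

Lemma fval_cons a s : fval r (a :: s) = a%:R + r * fval r s.
Proof.
rewrite /fval /= big_ord_recl /= expr0 mulr1; congr (_ + _).
by rewrite mulr_sumr; apply: eq_bigr => i _ /=; rewrite exprS mulrCA.
Qed.

Lemma fval_behead s : fval r s = (head 0%N s)%:R + r * fval r (behead s).
Proof. by case: s => [|a s]; rewrite ?fval_cons // fval_nil mulr0 addr0. Qed.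

Lemma flen_behead s : flen s = (head 0%N s + flen (behead s))%N.
Proof. by case: s. Qed.

Lemma r_mul_d : r * d%:R = n%:R.
Proof. by rewrite r_nd mulfVK // pnatr_eq0 -lt0n (ltn_trans _ n_lt_d) // ltnW. Qed.

Lemma r_gt0 : 0 < r.
Proof. by rewrite r_nd divr_gt0 // ltr0n; lia. Qed.

Lemma fval_exchange a b c u :
  fval r ((a + c * n)%N :: b :: u) = fval r (a :: (b + c * d)%N :: u).
Proof. by rewrite !fval_cons !natrD !natrM -r_mul_d; ring. Qed.

Lemma intr_natz (m : nat) : (m%:Z)%:~R = m%:R :> rat.
Proof. by []. Qed.

Definition d_adic (X : rat) : Prop :=
  exists (p : int) (K : nat), X * d%:R ^+ K = p%:~R.

Lemma d_adic_fval s : d_adic (fval r s).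
Proof.
elim: s => [|a s [p [K IH]]]; first by exists 0, 0%N; rewrite fval_nil mul0r.
exists ((a * d ^ K.+1)%N%:Z + n%:Z * p), K.+1.
rewrite fval_cons exprS mulrDl.
have -> : r * fval r s * (d%:R * d%:R ^+ K) = (r * d%:R) * (fval r s * d%:R ^+ K)
  by ring.
by rewrite r_mul_d IH rmorphD /= intrM !intr_natz natrM natrX exprS; ring.
Qed.

Lemma d_adic_sub X Y : d_adic X -> d_adic Y -> d_adic (X - Y).
Proof.
move=> [p [K hp]] [q [L hq]].
exists (p * (d ^ L)%N%:Z - q * (d ^ K)%N%:Z), (K + L)%N.
by rewrite rmorphB /= !intrM !intr_natz !natrX -hp -hq exprD; ring.
Qed.

Lemma d_adic_r_mul_int X (k : int) : d_adic X -> r * X = k%:~R ->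
  exists m : int, k = m * n%:Z /\ X = (m * d%:Z)%:~R.
Proof.
move=> [p [K hX]] hrX.
have n_neq0 : (n%:R : rat) != 0 by rewrite pnatr_eq0; lia.
have hnX : n%:R * X = k%:~R * d%:R by rewrite -r_mul_d -hrX; ring.
have hnp : n%:Z * p = k * (d ^ K.+1)%N%:Z.
  apply: (intr_inj (R := rat)).
  by rewrite !intrM !intr_natz -hX mulrA hnX natrX exprS; ring.
have n_dvd_k : (n%:Z %| k)%Z.
  have cop : coprimez n%:Z (d ^ K.+1)%N%:Z.
    by rewrite /coprimez /gcdz /= (eqP (coprimeXr K.+1 coprime_nd)).
  by rewrite -(Gauss_dvdzl _ cop); apply/dvdzP; exists p; rewrite -hnp mulrC.
have [m km] := dvdzP n_dvd_k.
exists m; split => //.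
by apply: (mulfI n_neq0); rewrite hnX km !intrM intr_natz; ring.
Qed.

Lemma seq2_behead_ind (P : seq nat -> seq nat -> Prop) : P [::] [::] ->
  (forall s t, P (behead s) (behead t) -> P s t) -> forall s t, P s t.
Proof.
move=> P0 PS s t; have [N] := ubnP (size s + size t).
elim: N s t => // N IH [|a s] [|b t] /= hst //; apply: PS; apply: IH => /=; lia.
Qed.

Lemma same_fact_behead s t : same_fact s t -> same_fact (behead s) (behead t).
Proof. by move=> st i; rewrite !nth_behead st. Qed.

Lemma same_fact_fval s t : same_fact s t -> fval r s = fval r t.
Proof.
move: s t; apply: seq2_behead_ind => // s t IH st.
by rewrite (fval_behead s) (fval_behead t) -!nth0 st (IH (same_fact_behead st)).
Qed.

Lemma same_fact_flen s t : same_fact s t -> flen s = flen t.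
Proof.
move: s t; apply: seq2_behead_ind => // s t IH st.
by rewrite (flen_behead s) (flen_behead t) -!nth0 st (IH (same_fact_behead st)).
Qed.

Lemma fval_ge0 s : 0 <= fval r s.
Proof.
elim: s => [|a s IH]; first by rewrite fval_nil.
by rewrite fval_cons addr_ge0 ?ler0n // mulr_ge0 // ltW // r_gt0.
Qed.

Lemma fval_eq0_flen s : fval r s = 0 -> flen s = 0%N.
Proof.
elim: s => [|a s IH] //; rewrite fval_cons => hs.
have ha := ler0n rat a.
have hr : 0 <= r * fval r s by rewrite mulr_ge0 ?fval_ge0 // ltW // r_gt0.
have /eqP : (a%:R : rat) = 0 by lra.
have /eqP : r * fval r s = 0 by lra.
rewrite mulf_eq0 gt_eqF ?r_gt0 //= pnatr_eq0 => /eqP/IH sl /eqP a0.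
by rewrite /flen /= a0 -/(flen s) sl.
Qed.

Lemma shorten_fact s i : (0 < i)%N -> (d <= nth 0%N s i)%N ->
  exists w, fval r w = fval r s /\ (flen w < flen s)%N.
Proof.
elim: s i => [|a t IH] [|i] //=; first by lia.
move=> _; case: i => [|i] hd.
  case: t IH hd => [|b u] IH /= hd; first lia.
  exists ((a + 1 * n)%N :: (b - d)%N :: u); split.
    by rewrite fval_exchange mul1n subnK.
  by rewrite /flen /=; lia.
have [w [wv wl]] := IH i.+1 erefl hd.
exists (a :: w); split; first by rewrite !fval_cons wv.
by rewrite /flen /= -/(flen w) -/(flen t); lia.
Qed.

Lemma lengthen_fact s i : (n <= nth 0%N s i)%N ->
  exists w, [/\ fval r w = fval r s, (flen s < flen w)%N & (n <= nth 0%N w i.+1)%N].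
Proof.
elim: s i => [|a t IH] [|i] //=; try lia.
  move=> ha; exists ((a - n)%N :: (head 0%N t + d)%N :: behead t); split.
  - by rewrite -(mul1n d) -fval_exchange mul1n subnK // !fval_cons -fval_behead.
  - rewrite /flen /= -/(flen t) -/(flen (behead t)) (flen_behead t); lia.
  - by rewrite /=; lia.
move=> hn; have [w [wv wl wn]] := IH i hn.
exists (a :: w); split => //; first by rewrite !fval_cons wv.
by rewrite /flen /= -/(flen w) -/(flen t); lia.
Qed.

Definition reduced (s : seq nat) : Prop :=
  forall i, (0 < i)%N -> (nth 0%N s i < d)%N.

Lemma reduced_behead s : reduced s -> reduced (behead s).
Proof. by move=> hs i hi; rewrite nth_behead; apply: hs. Qed.

(* Two reduced factorizations whose values differ by an integer agree at all
   positive indices: r times the difference of their tails is an integer, so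
   the tails differ by a multiple of d, and coefficients < d force equality. *)
Lemma reduced_int_diff s t : reduced s -> reduced t ->
  (exists m : int, fval r s - fval r t = m%:~R) ->
  forall j, (0 < j)%N -> nth 0%N s j = nth 0%N t j.
Proof.
move: s t; apply: seq2_behead_ind => // s t IH hs ht [m hm].
have hrX : r * (fval r (behead s) - fval r (behead t)) =
    (m - (head 0%N s)%:Z + (head 0%N t)%:Z)%:~R.
  by rewrite rmorphD rmorphB /= !intr_natz -hm (fval_behead s) (fval_behead t); ring.
have [m' [_ hm']] := d_adic_r_mul_int (d_adic_sub (d_adic_fval _) (d_adic_fval _)) hrX.
have tails := IH (reduced_behead hs) (reduced_behead ht) (ex_intro _ _ hm').
have tails2 : fval r (behead (behead s)) = fval r (behead (behead t)).
  by apply: same_fact_fval => i; move: (tails i.+1 erefl); rewrite !nth_behead.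
have heads : head 0%N (behead s) = head 0%N (behead t).
  move: hm'; rewrite (fval_behead (behead s)) (fval_behead (behead t)) tails2.
  set a1 := head 0%N (behead s); set b1 := head 0%N (behead t) => hm'.
  have e : a1%:Z - b1%:Z = m' * d%:Z.
    by apply: (intr_inj (R := rat)); rewrite -hm' rmorphB /= !intr_natz; ring.
  have := hs 1%N erefl; have := ht 1%N erefl; rewrite -!nth_behead !nth0 -/a1 -/b1.
  move=> hb1 ha1; clearbody a1 b1.
  have m'0 : m' = 0 by nia.
  by apply/eqP; rewrite -eqz_nat -subr_eq0 e m'0 mul0r.
case=> [|[|j]] // _; first by rewrite -!nth_behead !nth0.
by move: (tails j.+1 erefl); rewrite !nth_behead.
Qed.

Lemma reduced_unique s t : reduced s -> reduced t -> fval r s = fval r t ->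
  same_fact s t.
Proof.
move=> hs ht st.
have int_diff : exists m : int, fval r s - fval r t = m%:~R by exists 0; rewrite st subrr.
have tails := reduced_int_diff hs ht int_diff.
have tailv : fval r (behead s) = fval r (behead t).
  by apply: same_fact_fval => i; rewrite !nth_behead tails.
case=> [|j]; last exact: tails.
move: st; rewrite (fval_behead s) (fval_behead t) tailv => /addIr /eqP.
by rewrite eqr_nat !nth0 => /eqP.
Qed.

Lemma reduce_fact w :
  exists w', [/\ reduced w', fval r w' = fval r w & (flen w' <= flen w)%N].
Proof.
have [N] := ubnP (flen w); elim: N w => // N IH w hw.
have [[i [hi hd]] | no_big] :=
  classic (exists i, (0 < i)%N /\ (d <= nth 0%N w i)%N).
  have [w1 [v1 l1]] := shorten_fact hi hd.
  have [w2 [red2 v2 l2]] := IH w1 (leq_trans l1 hw).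
  by exists w2; split => //; [rewrite v2 | lia].
exists w; split => // i hi; rewrite ltnNge; apply/negP => hd.
by apply: no_big; exists i.
Qed.

Lemma minimal_iff_reduced s :
  (forall w, fval r w = fval r s -> (flen s <= flen w)%N) <-> reduced s.
Proof.
split=> [smin i hi | hs w hw].
  rewrite ltnNge; apply/negP => hd.
  have [w [wv wl]] := shorten_fact hi hd.
  by have := smin w wv; lia.
have [w' [red' v' l']] := reduce_fact w.
by rewrite (same_fact_flen (reduced_unique hs red' _)) // v' hw.
Qed.

Lemma reducedP s :
  reduced s <-> forall i, (0 < i)%N -> (i < size s)%N -> (nth 0%N s i < d)%N.
Proof.
split=> hs i hi; first by move=> _; apply: hs.
have [lt_is | le_si] := ltnP i (size s); first exact: hs.
by rewrite nth_default //; lia.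
Qed.

Lemma unique_minimal_fact s : exists w, [/\ fval r w = fval r s,
  (forall w', fval r w' = fval r s -> (flen w <= flen w')%N) &
  (forall w', fval r w' = fval r s -> flen w' = flen w -> same_fact w' w)].
Proof.
have [w [red_w wv _]] := reduce_fact s.
have wmin := proj2 (minimal_iff_reduced w) red_w.
exists w; split => // [w' w'v | w' w'v w'l]; first by apply: wmin; rewrite w'v wv.
apply: reduced_unique => //; last by rewrite w'v wv.
by apply/minimal_iff_reduced => u uv; rewrite w'l wmin // uv w'v wv.
Qed.

(* If every coefficient of s is < n, then s has maximal length: comparing
   heads, any other factorization has head a + c * n, and exchanging those c
   groups of n upwards reduces to the tail of s. *)
Lemma small_coeffs_max_length s : (forall i, (nth 0%N s i < n)%N) ->
  forall w, fval r w = fval r s -> (flen w <= flen s)%N.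
Proof.
elim: s => [|a s IH] hs w hw.
  by rewrite fval_nil in hw; rewrite (fval_eq0_flen hw).
set w0 := head 0%N w; set w1 := head 0%N (behead w); set w' := behead (behead w).
have w_split : fval r w = fval r [:: w0, w1 & w'] by rewrite !fval_cons -!fval_behead.
have hrX : r * (fval r s - fval r (behead w)) = (w0%:Z - a%:Z)%:~R.
  move: hw; rewrite fval_cons (fval_behead w) rmorphB /= !intr_natz mulrBr => hw.
  by rewrite -/w0; lra.
have [k [hk _]] := d_adic_r_mul_int (d_adic_sub (d_adic_fval _) (d_adic_fval _)) hrX.
have [c w0_eq] : exists c : nat, w0 = (a + c * n)%N.
  by exists `|k|%N; have := hs 0%N; rewrite /=; nia.
have tail_v : fval r ((w1 + c * d)%N :: w') = fval r s.
  apply: (mulfI (negbT (gt_eqF r_gt0))); apply: (addrI a%:R).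
  by rewrite -!fval_cons -fval_exchange -w0_eq -w_split hw.
have := IH (fun i => hs i.+1) _ tail_v.
have : (c * n <= c * d)%N by rewrite leq_mul // ltnW.
rewrite (flen_behead w) (flen_behead (behead w)) -/w0 -/w1 -/w' w0_eq.
by rewrite /flen /= -/(flen s) -/(flen w'); lia.
Qed.

Lemma unbounded_lengths_iff s :
  (forall M : nat, exists w, fval r w = fval r s /\ (M < flen w)%N) <->
  (exists i, (i < size s)%N /\ (n <= nth 0%N s i)%N).
Proof.
split=> [unbounded | [i [_ hi]]].
  apply: NNPP => no_big.
  have small : forall i, (nth 0%N s i < n)%N.
    move=> i; have [lt_is | le_si] := ltnP i (size s).
      by rewrite ltnNge; apply/negP => hn; apply: no_big; exists i.
    by rewrite nth_default //; lia.
  have [w [wv wl]] := unbounded (flen s).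
  by have := small_coeffs_max_length small wv; lia.
suff longer : forall M, exists w, [/\ fval r w = fval r s, (M < flen w)%N &
                                  exists j, (n <= nth 0%N w j)%N].
  by move=> M; have [w [wv wl _]] := longer M; exists w.
elim=> [|M [w [wv wl [j hj]]]].
  by have [w [wv wl wn]] := lengthen_fact hi; exists w; split => //; [lia | exists i.+1].
have [w' [v' l' n']] := lengthen_fact hj.
by exists w'; split; [rewrite v' | lia | exists j.+1].
Qed.

Lemma unique_fact_iff_unique_length s :
  (forall w, fval r w = fval r s -> same_fact w s) <->
  (forall w, fval r w = fval r s -> flen w = flen s).
Proof.
split=> [uniq_fact w wv | uniq_len w wv]; first exact: same_fact_flen (uniq_fact w wv).
have min_s : reduced s by apply/minimal_iff_reduced => u uv; rewrite (uniq_len u uv).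
apply: reduced_unique => //.
by apply/minimal_iff_reduced => u uv; rewrite (uniq_len u) ?uv ?wv // (uniq_len w wv).
Qed.

(* An element with a unique factorization has all its coefficients < n, since
   a coefficient >= n could be exchanged upwards into a longer factorization. *)
Lemma unique_fact_small_coeffs s :
  (forall w, fval r w = fval r s -> same_fact w s) ->
  forall i, (nth 0%N s i < n)%N.
Proof.
move=> uniq_fact i; rewrite ltnNge; apply/negP => hn.
have [w [wv wl _]] := lengthen_fact hn.
by have := same_fact_flen (uniq_fact w wv); lia.
Qed.

End Factorizations.

Theorem lemma3p1 (r x : rat) (z : seq nat)
  (hr0 : (0 < r)%R) (hr1 : (r < 1)%R) (hatomic : (1 < numq r)%R)
  (hx : x != 0%R) (hz : is_fact r x z) :
  ((forall w, is_fact r x w -> (flen z <= flen w)%N) <->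
     (forall i : nat, (0 < i)%N -> (i < size z)%N -> ((nth 0%N z i)%:Z < denq r)%R))
  /\ (exists w, [/\ is_fact r x w,
                   (forall w', is_fact r x w' -> (flen w <= flen w')%N) &
                   (forall w', is_fact r x w' -> flen w' = flen w -> same_fact w' w)])
  /\ ((forall M : nat, exists w, is_fact r x w /\ (M < flen w)%N) <->
      (exists i : nat, (i < size z)%N /\ (numq r <= (nth 0%N z i)%:Z)%R))
  /\ (((forall w, is_fact r x w -> same_fact w z) <->
       (forall w, is_fact r x w -> flen w = flen z))
      /\ ((forall w, is_fact r x w -> same_fact w z) ->
          forall i : nat, (i < size z)%N -> ((nth 0%N z i)%:Z < numq r)%R)).
Proof.
set n := `|numq r|%N; set d := `|denq r|%N.
have den_gt0 := denq_gt0 r.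
have num_r : numq r = (n%:Z)%R by rewrite /n; lia.
have den_r : denq r = (d%:Z)%R by rewrite /d; lia.
have r_nd : r = (n%:R / d%:R)%R by rewrite -[in LHS](divq_num_den r) num_r den_r.
have n_gt1 : (1 < n)%N by move: hatomic; rewrite num_r.
have n_lt_d : (n < d)%N.
  by move: hr1; rewrite r_nd ltr_pdivrMr ?mul1r ?ltr_nat // ltr0n; lia.
have coprime_nd : coprime n d := coprime_num_den r.
rewrite num_r den_r; move: hz; rewrite /is_fact => <-.
split; [|split; [|split; [|split]]].
- exact: iff_trans (minimal_iff_reduced r_nd n_gt1 n_lt_d coprime_nd z)
                   (reducedP n_gt1 n_lt_d coprime_nd z).
- exact: (unique_minimal_fact r_nd n_gt1 n_lt_d coprime_nd z).
- exact (unbounded_lengths_iff r_nd n_gt1 n_lt_d coprime_nd z).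
- exact: (unique_fact_iff_unique_length r_nd n_gt1 n_lt_d coprime_nd z).
- move=> uniq_fact i _.
  exact: (unique_fact_small_coeffs r_nd n_gt1 n_lt_d coprime_nd uniq_fact).
Qed.
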